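(* Let $\mathcal{M}\subseteq\mathcal{M}_1$ and $\mathbb{P}\in\mathcal{M}$. Let $\alpha$ be of the form $\alpha(Q)=\widetilde\alpha(Q)$ for $Q\in\mathcal{Q}^{\mathbb{P}}$, $\alpha(Q)=+\infty$ for $Q\in\mathcal{M}_1\setminus\mathcal{Q}^{\mathbb{P}}$, where $\mathcal{Q}^{\mathbb{P}}$ is a weak-$*$-closed subset of $\mathcal{P}^{\mathbb{P}}$, $\widetilde\alpha<\infty$ on $\mathcal{Q}^{\mathbb{P}}$ and $\inf_{\mathcal{Q}^{\mathbb{P}}}\widetilde\alpha>-\infty$. Then for all $X\in\mathcal{X}^{\mathcal{M}}\cap L^\infty(\mathbb{P})$, $\widehat\rho^{\mathcal{M}}(X)=\widehat\rho^{\mathbb{P}}(X)=\rho^{\mathbb{P}}(X)=\rho^{\mathcal{M}}(X)$.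
   Context: $(\Omega,\mathcal{F})$ is a measurable space, $\mathcal{M}_1$ the set of probability measures on it with the topology of weak (weak-$*$) convergence, $\mathcal{X}$ the space of pointwise bounded $\mathcal{F}$-measurable real functions, $L^\infty(P)=L^\infty(\Omega,\mathcal{F},P)$, $\mathcal{P}^P=\{Q\in\mathcal{M}_1:Q\ll P\}$. With $\alpha$ as in the claim, $\rho(X)=\sup_{Q\in\mathcal{M}_1}\{\mathbb{E}_Q[-X]-\alpha(Q)\}$ on $\mathcal{X}$ (assumed real-valued). For $P\in\mathcal{M}_1$, $X\in L^\infty(P)$: $\rho^P(X)=\inf_{\{\widetilde X\in\mathcal{X}:P(\widetilde X=X)=1\}}\rho(\widetilde X)$ and $\widehat\rho^P(X)=\sup_{Q\in\mathcal{P}^P}\{\mathbb{E}_Q[-X]-\alpha(Q)\}$. $\mathcal{X}^{\mathcal{M}}=\bigcap_{P\in\mathcal{M}}L^\infty(P)$, $\rho^{\mathcal{M}}(X)=\sup_{P\in\mathcal{M}}\rho^P(X)$ and $\widehat\rho^{\mathcal{M}}(X)=\sup_{P\in\mathcal{M}}\widehat\rho^P(X)$. *)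

From HB Require Import structures.
From mathcomp Require Import all_boot all_order all_algebra.
From mathcomp Require Import all_classical all_reals all_analysis.
Set Implicit Arguments. Unset Strict Implicit. Unset Printing Implicit Defensive.
Import Order.TTheory GRing.Theory Num.Theory.
Local Open Scope classical_set_scope.
Local Open Scope ring_scope.

Section defs.
Context (d : measure_display) (T : measurableType d) (R : realType).

Definition bounded_meas (X : T -> R) : Prop :=
  measurable_fun setT X /\ exists c : R, forall x, `|X x| <= c.

Definition Linf (P : probability T R) (X : T -> R) : Prop :=
  measurable_fun setT X /\ exists c : R, {ae P, forall x, `|X x| <= c}.

Definition expect (Q : probability T R) (X : T -> R) : \bar R :=
  (\int[Q]_x (X x)%:E)%E.

(* weak-* closedness in M_1 for the topology σ(M_1, 𝒳): a set S is closed iff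
   it contains every Q all of whose basic neighbourhoods
   {Q' : |E_Q'[X_i] - E_Q[X_i]| < eps, i < n} meet S. *)
Definition weak_closed (S : set (probability T R)) : Prop :=
  forall Q : probability T R,
    (forall (n : nat) (Xs : 'I_n -> T -> R) (eps : R),
        (forall i, bounded_meas (Xs i)) -> 0 < eps ->
        exists Q', S Q' /\
          forall i, (`|expect Q' (Xs i) - expect Q (Xs i)| < eps%:E)%E) ->
    S Q.

Definition rho (alpha : probability T R -> \bar R) (X : T -> R) : \bar R :=
  ereal_sup [set (expect Q (fun x => (- X x)%R) - alpha Q)%E | Q in [set: probability T R]].

Definition rhoP (alpha : probability T R -> \bar R) (P : probability T R)
  (X : T -> R) : \bar R :=
  ereal_inf [set rho alpha Y |
    Y in [set Y | bounded_meas Y /\ P [set x | Y x = X x] = 1%E]].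

Definition rhohatP (alpha : probability T R -> \bar R) (P : probability T R)
  (X : T -> R) : \bar R :=
  ereal_sup [set (expect Q (fun x => (- X x)%R) - alpha Q)%E |
    Q in [set Q : probability T R | Q `<< P]].

Definition rhoM (alpha : probability T R -> \bar R) (M : set (probability T R))
  (X : T -> R) : \bar R :=
  ereal_sup [set rhoP alpha P X | P in M].

Definition rhohatM (alpha : probability T R -> \bar R) (M : set (probability T R))
  (X : T -> R) : \bar R :=
  ereal_sup [set rhohatP alpha P X | P in M].

End defs.

(* Since alpha = +oo off Q^P and Q^P consists of measures Q << P, only such Q
   contribute to any of the suprema.  Hence rho(Y) depends only on the P-class
   of Y and equals rhohat^P(X) whenever Y = X P-a.s., so rho^P(X) = rhohat^P(X).
   For P' in M, rhohat^P'(X) <= rhohat^P(X), and rho^P'(X) <= rhohat^P(X) by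
   evaluating rho at a truncation of X that is bounded and agrees with X both
   P- and P'-a.s.; as P is in M this gives all the equalities. *)
From HB Require Import structures.
From mathcomp Require Import all_boot all_order all_algebra.
From mathcomp Require Import all_classical all_reals all_analysis.
From mathcomp Require Import measurable_realfun.
Import Order.TTheory GRing.Theory Num.Theory.
Local Open Scope classical_set_scope.
Local Open Scope ring_scope.

Lemma ereal_sup_image_max (R : realType) (I : Type) (f : I -> \bar R)
    (A : set I) (i : I) :
  A i -> (forall j, A j -> (f j <= f i)%E) -> ereal_sup (f @` A) = f i.
Proof.
move=> Ai fi_max; apply/eqP; rewrite eq_le; apply/andP; split.
- by apply: ge_ereal_sup => _ [j Aj <-]; exact: fi_max.
- by apply: ereal_sup_ubound; exists i.
Qed.

Section almost_sure_versions.
Set Implicit Arguments.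
Context {d : measure_display} {T : measurableType d} {R : realType}.

Lemma measurable_eqr_set (Y X : T -> R) :
  measurable_fun setT Y -> measurable_fun setT X ->
  measurable [set x | Y x = X x].
Proof.
move=> mY mX.
rewrite (_ : [set x | Y x = X x] =
             setT `&` (fun x => Y x == X x) @^-1` [set true]).
  by apply: (measurable_fun_eqr mY mX measurableT).
by apply/seteqP; split => x /= => [->|[_ /eqP //]]; rewrite eqxx.
Qed.

Lemma probability_eq1_ae_eq (P : probability T R) (Y X : T -> R) :
  measurable_fun setT Y -> measurable_fun setT X ->
  P [set x | Y x = X x] = 1%E <-> ae_eq P setT Y X.
Proof.
move=> mY mX; have mYX := measurable_eqr_set mY mX; split.
- move=> PYX1; exists (~` [set x | Y x = X x]); split.
  + exact: measurableC.
  + by have := probability_setC P mYX; rewrite PYX1 subee.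
  + by move=> x /= nYXx YXx; apply: nYXx.
- move=> [N [mN PN0 YX_offN]]; apply/eqP; rewrite eq_le probability_le1 //=.
  have PNC1 : P (~` N) = 1%E.
    by have := probability_setC P mN; rewrite PN0 sube0.
  rewrite -PNC1; apply: le_measure; rewrite ?inE //; first exact: measurableC.
  move=> x Nx /=; apply: contrapT => nYXx; apply: Nx; apply: YX_offN.
  by move=> /(_ I).
Qed.

Lemma expect_ae_eq (Q : probability T R) (Y X : T -> R) :
  measurable_fun setT Y -> measurable_fun setT X ->
  ae_eq Q setT Y X -> expect Q Y = expect Q X.
Proof.
move=> mY mX YX; apply: ae_eq_integral => //; try exact/measurable_EFinP.
exact: ae_eq_comp.
Qed.

Definition trunc (X : T -> R) (c : R) (x : T) : R :=
  if `|X x| <= c then X x else 0.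

Lemma bounded_meas_trunc (X : T -> R) (c : R) :
  measurable_fun setT X -> bounded_meas (trunc X c).
Proof.
move=> mX; split.
- apply: measurable_fun_ifT => //.
  by apply: measurable_fun_ler => //; exact: measurableT_comp.
- exists `|c| => x; rewrite /trunc; case: ifPn => [Xx_le|_].
  + exact: le_trans Xx_le (ler_norm _).
  + by rewrite normr0.
Qed.

Lemma trunc_ae_eq (P : probability T R) (X : T -> R) (c c' : R) :
  {ae P, forall x, `|X x| <= c'} -> c' <= c -> ae_eq P setT (trunc X c) X.
Proof.
move=> X_le c'c; apply: filterS X_le => x /= Xx_le _.
by rewrite /trunc (le_trans Xx_le c'c).
Qed.

End almost_sure_versions.

Section penalty_concentrated_on_P.
Set Implicit Arguments. Unset Strict Implicit.
Context {d : measure_display} {T : measurableType d} {R : realType}.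
Variables (alpha : probability T R -> \bar R) (P : probability T R).
Hypothesis alpha_abscont :
  forall Q : probability T R, ~ Q `<< P -> alpha Q = +oo%E.

Local Notation penalised Q X :=
  (expect Q (fun x => (- X x)%R) - alpha Q)%E.

Lemma penalised_le_abscont (Q : probability T R) (X : T -> R) (y : \bar R) :
  (Q `<< P -> (penalised Q X <= y)%E) -> (penalised Q X <= y)%E.
Proof.
have [QP|nQP] := pselect (Q `<< P); first by apply.
by rewrite alpha_abscont //= addeNy leNye.
Qed.

Lemma rho_ae_eq (Y X : T -> R) :
  measurable_fun setT Y -> measurable_fun setT X ->
  ae_eq P setT Y X -> rho alpha Y = rhohatP alpha P X.
Proof.
move=> mY mX YX.
have penalisedE (Q : probability T R) :
    Q `<< P -> penalised Q Y = penalised Q X.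
  move=> QP; congr (_ - _)%E.
  apply: expect_ae_eq; try exact: measurableT_comp.
  by apply: ae_eq_comp; exact: null_dominates_ae_eq YX.
apply/eqP; rewrite eq_le; apply/andP; split.
- apply: ge_ereal_sup => _ [Q _ <-]; apply: penalised_le_abscont => QP.
  by rewrite penalisedE //; apply: ereal_sup_ubound; exists Q.
- apply: ge_ereal_sup => _ [Q QP <-].
  by rewrite -penalisedE //; apply: ereal_sup_ubound; exists Q.
Qed.

Lemma rhohatP_le (P' : probability T R) (X : T -> R) :
  (rhohatP alpha P' X <= rhohatP alpha P X)%E.
Proof.
apply: ge_ereal_sup => _ [Q _ <-]; apply: penalised_le_abscont => QP.
by apply: ereal_sup_ubound; exists Q.
Qed.

Lemma rhoP_le_rhohatP (P' : probability T R) (X : T -> R) :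
  Linf P X -> Linf P' X -> (rhoP alpha P' X <= rhohatP alpha P X)%E.
Proof.
move=> [mX [c X_le]] [_ [c' X_le']].
pose Y := trunc X (Num.max c c').
have bY : bounded_meas Y := bounded_meas_trunc _ mX.
have YX : ae_eq P setT Y X.
  by apply: trunc_ae_eq X_le _; rewrite le_max lexx.
have YX' : ae_eq P' setT Y X.
  by apply: trunc_ae_eq X_le' _; rewrite le_max lexx orbT.
rewrite -(rho_ae_eq bY.1 mX YX).
apply: ereal_inf_lbound; exists Y => //; split => //.
exact/(probability_eq1_ae_eq P' bY.1 mX).
Qed.

Lemma rhoP_eq_rhohatP (X : T -> R) :
  Linf P X -> rhoP alpha P X = rhohatP alpha P X.
Proof.
move=> LinfX; apply/eqP; rewrite eq_le rhoP_le_rhohatP //=.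
apply: le_ereal_inf_tmp => _ [Y [[mY _] PYX1] <-].
have [mX _] := LinfX.
by rewrite (rho_ae_eq mY mX) //; apply/probability_eq1_ae_eq.
Qed.

End penalty_concentrated_on_P.

Theorem corollary5p10 (d : measure_display) (T : measurableType d) (R : realType)
  (M : set (probability T R)) (P : probability T R)
  (alpha alphat : probability T R -> \bar R) (QP : set (probability T R)) :
  M P ->
  weak_closed QP ->
  QP `<=` [set Q : probability T R | Q `<< P] ->
  (forall Q, QP Q -> (alphat Q < +oo)%E) ->
  (-oo < ereal_inf [set alphat Q | Q in QP])%E ->
  (forall Q, QP Q -> alpha Q = alphat Q) ->
  (forall Q, ~ QP Q -> alpha Q = +oo%E) ->
  (forall Y : T -> R, bounded_meas Y -> rho alpha Y \is a fin_num) ->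
  forall X : T -> R,
    (forall P', M P' -> Linf P' X) -> Linf P X ->
    rhohatM alpha M X = rhohatP alpha P X /\
    rhohatP alpha P X = rhoP alpha P X /\
    rhoP alpha P X = rhoM alpha M X.
Proof.
move=> MP _ QP_abscont _ _ _ alpha_offQP _ X LinfM LinfP.
have alpha_abscont (Q : probability T R) : ~ Q `<< P -> alpha Q = +oo%E.
  by move=> nQP; apply: alpha_offQP => /QP_abscont.
have rhoPE := rhoP_eq_rhohatP alpha_abscont LinfP.
have rhohatME : rhohatM alpha M X = rhohatP alpha P X.
  by apply: ereal_sup_image_max => // P' _; exact: rhohatP_le.
have rhoME : rhoM alpha M X = rhoP alpha P X.
  apply: ereal_sup_image_max => // P' MP'.
  by rewrite rhoPE; apply: rhoP_le_rhohatP => //; exact: LinfM.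
by rewrite rhohatME rhoME rhoPE.
Qed.
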